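(* Let $S$ be a finitely generated submonoid of $\mathbb N^d$ that has a Frobenius element $\mathbf f$ and is irreducible. Then (a) $S$ is maximal (with respect to inclusion) among all submonoids of $\mathbb N^d$ having $\mathbf f$ as a Frobenius element; (b) $S$ has a unique Frobenius element.
   Context: For a submonoid $T$ of $\mathbb N^d$, $\mathrm{pos}(T)$ is the set of finite nonnegative rational combinations of elements of $T$ and $\mathcal H(T)=(\mathrm{pos}(T)\setminus T)\cap\mathbb N^d$. A term order on $\mathbb N^d$ is a total order compatible with addition with $0$ least. $\mathbf f\in\mathcal H(T)$ is a Frobenius element of $T$ if $\mathbf f=\max_\prec\mathcal H(T)$ for some term order $\prec$. A submonoid of $\mathbb N^d$ is irreducible if it cannot be expressed as the intersection of two submonoids of $\mathbb N^d$ each containing it properly. *)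

From mathcomp Require Import all_boot all_order all_algebra.
Set Implicit Arguments. Unset Strict Implicit. Unset Printing Implicit Defensive.
Import Order.TTheory GRing.Theory Num.Theory.

Definition vec (d : nat) := {ffun 'I_d -> nat}.
Definition vzero (d : nat) : vec d := [ffun _ => 0%N].
Definition vadd (d : nat) (x y : vec d) : vec d := [ffun i => (x i + y i)%N].
Definition vsum (d : nat) (s : seq (vec d)) : vec d := foldr (@vadd d) (vzero d) s.

Definition submonoid (d : nat) (T : vec d -> Prop) : Prop :=
  T (vzero d) /\ (forall x y, T x -> T y -> T (vadd x y)).

Definition finitely_generated (d : nat) (T : vec d -> Prop) : Prop :=
  exists G : seq (vec d), forall x,
    T x <-> exists s : seq (vec d), {subset s <= G} /\ x = vsum s.

Definition pos (d : nat) (T : vec d -> Prop) (q : 'I_d -> rat) : Prop :=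
  exists s : seq (rat * vec d),
    (forall p, p \in s -> (0 <= p.1)%R /\ T p.2) /\
    forall i, q i = (\sum_(p <- s) p.1 * ((p.2 i)%:R : rat))%R.

(* H(T) = (pos(T) \ T) ∩ N^d *)
Definition holes (d : nat) (T : vec d -> Prop) (x : vec d) : Prop :=
  pos T (fun i => ((x i)%:R : rat)) /\ ~ T x.

Definition term_order (d : nat) (le : vec d -> vec d -> Prop) : Prop :=
  (forall x, le x x) /\
  (forall x y, le x y -> le y x -> x = y) /\
  (forall x y z, le x y -> le y z -> le x z) /\
  (forall x y, le x y \/ le y x) /\
  (forall x y z, le x y -> le (vadd x z) (vadd y z)) /\
  (forall x, le (vzero d) x).

Definition frobenius (d : nat) (T : vec d -> Prop) (f : vec d) : Prop :=
  holes T f /\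
  exists le, term_order le /\ forall h, holes T h -> le h f.

Definition irreducible (d : nat) (S : vec d -> Prop) : Prop :=
  submonoid S /\
  ~ exists T1 T2 : vec d -> Prop,
      [/\ submonoid T1, submonoid T2,
          (forall x, S x -> T1 x) /\ (exists x, T1 x /\ ~ S x),
          (forall x, S x -> T2 x) /\ (exists x, T2 x /\ ~ S x) &
          forall x, S x <-> (T1 x /\ T2 x)].

(* Adjoining a Frobenius element f to S yields a submonoid: every element of
   pos(S) of the form f + y is either in S or a hole, and a hole f + y, being
   above f in the term order, must be f itself.  By irreducibility, a
   submonoid T containing S but not f must equal S, since otherwise T and
   S ∪ {f} would properly contain S and meet in S.  For (a), f is a hole of T,
   so T avoids f; for (b), S ∪ {g} avoids f unless g = f. *)
From mathcomp Require Import all_boot all_order all_algebra.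
From Stdlib Require Import Classical.
Import GRing.Theory Num.Theory.

Set Implicit Arguments.
Unset Strict Implicit.

Definition adjoin d (S : vec d -> Prop) (f : vec d) (x : vec d) : Prop :=
  S x \/ x = f.

Lemma vaddC d (x y : vec d) : vadd x y = vadd y x.
Proof. by apply/ffunP => i; rewrite !ffunE addnC. Qed.

Lemma vadd0v d (x : vec d) : vadd (vzero d) x = x.
Proof. by apply/ffunP => i; rewrite !ffunE. Qed.

Lemma pos_vadd d (S : vec d -> Prop) (x y : vec d) :
  pos S (fun i => ((x i)%:R : rat)) -> pos S (fun i => ((y i)%:R : rat)) ->
  pos S (fun i => ((vadd x y i)%:R : rat)).
Proof.
move=> [s1 [s1S s1x]] [s2 [s2S s2y]]; exists (s1 ++ s2); split.
  by move=> p; rewrite mem_cat => /orP [/s1S|/s2S].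
by move=> i; rewrite big_cat /= ffunE natrD s1x s2y.
Qed.

Lemma pos_mem d (S : vec d -> Prop) (y : vec d) :
  S y -> pos S (fun i => ((y i)%:R : rat)).
Proof.
move=> Sy; exists [:: (1%R, y)]; split; first by move=> p; rewrite inE => /eqP ->.
by move=> i; rewrite big_seq1 mul1r.
Qed.

Lemma frobenius_addv d (S : vec d -> Prop) (f y : vec d) : frobenius S f ->
  pos S (fun i => ((vadd f y i)%:R : rat)) -> adjoin S f (vadd f y).
Proof.
move=> [_ [le [[_ [le_anti [_ [_ [le_add le0]]]]] le_f]]] pos_fy.
case: (classic (S (vadd f y))) => [|nS_fy]; [by left | right].
apply: le_anti; first exact: le_f.
by have := le_add _ _ f (le0 y); rewrite vadd0v vaddC.
Qed.

Lemma submonoid_adjoin_frobenius d (S : vec d -> Prop) (f : vec d) :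
  submonoid S -> frobenius S f -> submonoid (adjoin S f).
Proof.
move=> [S0 SD] Ff; have pos_f := Ff.1.1; split; first by left.
move=> x y [Sx|->] [Sy|->].
- by left; apply: SD.
- by rewrite vaddC; apply: (frobenius_addv Ff); apply: pos_vadd => //; apply: pos_mem.
- by apply: (frobenius_addv Ff); apply: pos_vadd => //; apply: pos_mem.
- by apply: (frobenius_addv Ff); apply: pos_vadd.
Qed.

Lemma irreducible_oversubmonoid d (S T : vec d -> Prop) (f : vec d) :
  irreducible S -> frobenius S f -> submonoid T -> (forall x, S x -> T x) ->
  ~ T f -> forall x, T x -> S x.
Proof.
move=> [monS irrS] Ff monT sST nTf x Tx; apply: NNPP => nSx; apply: irrS.
exists T, (adjoin S f); split => //.
- exact: submonoid_adjoin_frobenius.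
- by split; last exists x.
- by split; [left | exists f; split; [right | exact: Ff.1.2]].
- move=> y; split=> [Sy | [Ty [//|y_f]]]; first by split; [apply: sST | left].
  by rewrite y_f in Ty.
Qed.

Theorem proposition4p2 (d : nat) (S : vec d -> Prop) (f : vec d) :
  submonoid S -> finitely_generated S -> frobenius S f -> irreducible S ->
  (* (a) maximality among submonoids having f as a Frobenius element *)
  (forall T : vec d -> Prop, submonoid T -> (forall x, S x -> T x) ->
     frobenius T f -> forall x, T x <-> S x) /\
  (* (b) uniqueness of the Frobenius element *)
  (forall g : vec d, frobenius S g -> g = f).
Proof.
move=> monS _ Ff irrS; split.
- move=> T monT sST [[_ nTf] _] x; split; last exact: sST.
  exact: (irreducible_oversubmonoid irrS Ff).
- move=> g Fg; apply: NNPP => g_neq_f; case: Fg.1.2.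
  apply: (irreducible_oversubmonoid irrS Ff (T := adjoin S g)); last by right.
  + exact: submonoid_adjoin_frobenius monS Fg.
  + by move=> y Sy; left.
  + by case=> [Sf|f_g]; [exact: Ff.1.2 Sf | apply: g_neq_f].
Qed.
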